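(* Let $S$ be a separable metric space with Borel $\sigma$-field $\mathcal{S}$, and let $\pi_{1},\pi_{2}:\Omega\to C(S)$ be two cr-sets. (a) If $\pi_1$ and $\pi_2$ are both constructive and \[P(\pi_{1}\cap F\neq \emptyset)=P(\pi_{2}\cap F\neq \emptyset)\quad\text{for all closed } F\subseteq S, \tag{$*$}\] then $P_{\pi_{1}}=P_{\pi_{2}}$. (b) If only $\pi_{2}$ is assumed constructive, then $( * )$ together with the condition ''for all $A\in\mathcal{S}$, $P(\pi_{2}\cap A\neq \emptyset)=0$ implies $P(\pi_{1}\cap A\neq \emptyset)=0$'' yields $P_{\pi_{1}}=P_{\pi_{2}}$. (c) If only $\pi_{2}$ is assumed constructive and $P(\pi_{1}\cap A\neq \emptyset)=P(\pi_{2}\cap A\neq \emptyset)$ for all $G_\delta$-sets $A\subseteq S$, then $P_{\pi_{1}}=P_{\pi_{2}}$.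
   Context: $(\Omega,\mathcal{F},P)$ is a probability space; $C(S)$ is the set of countable subsets of $S$; $N_A(M)=|A\cap M|$; $\mathcal{C}(\mathcal{S})=\sigma(N_A\mid A\in\mathcal{S})$; a cr-set is an $\mathcal{F}$-$\mathcal{C}(\mathcal{S})$ measurable map $\pi:\Omega\to C(S)$ with law $P_\pi$. A cr-set is finite if $|\pi(\omega)|<\infty$ for all $\omega$. A map $\tau:\Omega\to C(S)$ is constructive if there are finite cr-sets $\pi_k$, $k\in\mathbb{N}$, with $\tau(\omega)=\bigcup_k\pi_k(\omega)$ for all $\omega\in\Omega$. A $G_\delta$-set is a countable intersection of open sets. *)

From HB Require Import structures.
From mathcomp Require Import all_boot all_order all_algebra finmap.
From mathcomp Require Import all_classical all_reals all_analysis borel_hierarchy.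
Set Implicit Arguments. Unset Strict Implicit. Unset Printing Implicit Defensive.
Import Order.TTheory GRing.Theory Num.Theory.
Local Open Scope classical_set_scope.
Local Open Scope ring_scope.

Section space_defs.
Context {R : realType} (S : metricType R).

Definition separable_space : Prop :=
  exists D : set S, countable D /\ closure D = [set: S].

Definition borel_sets : set (set S) := <<s [set: S], open >>.

Definition CS : set (set S) := [set M | countable M].

(* cardinality in N u {oo} (None = oo) *)
Definition ncard (X : set S) : option nat :=
  if pselect (finite_set X) then Some #|` fset_set X|%fset else None.

Definition NA (A M : set S) : option nat := ncard (A `&` M).

(* generators of sigma(N_A | A Borel) on C(S): preimages N_A^{-1}(B) for all
   B subset of N u {oo} (discrete sigma-field on N u {oo}) *)
Definition CS_gen : set (set (set S)) :=
  [set E | exists (A : set S) (B : set (option nat)),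
     borel_sets A /\ E = CS `&` [set M | B (NA A M)]].

Definition CS_sigma : set (set (set S)) := <<s CS, CS_gen >>.

End space_defs.

Section crsets.
Context {d : measure_display} {Om : measurableType d} {R : realType}
  {S : metricType R}.

Definition crset (pi : Om -> set S) : Prop :=
  (forall w, countable (pi w)) /\
  (forall E, @CS_sigma _ S E -> measurable (pi @^-1` E)).

Definition finite_crset (pi : Om -> set S) : Prop :=
  crset pi /\ (forall w, finite_set (pi w)).

Definition constructive (tau : Om -> set S) : Prop :=
  exists pk : nat -> Om -> set S,
    (forall k, finite_crset (pk k)) /\ (forall w, tau w = \bigcup_k pk k w).

Definition hitP (P : probability Om R) (pi : Om -> set S) (A : set S) : \bar R :=
  P [set w | pi w `&` A !=set0].

Definition law_eq (P : probability Om R) (pi1 pi2 : Om -> set S) : Prop :=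
  forall E, @CS_sigma _ S E -> P (pi1 @^-1` E) = P (pi2 @^-1` E).

End crsets.

From HB Require Import structures.
From mathcomp Require Import all_boot all_order all_algebra finmap.
From mathcomp Require Import all_classical all_reals all_analysis borel_hierarchy.
From mathcomp Require Import zify lra.
Import Order.TTheory GRing.Theory Num.Theory.
Local Open Scope classical_set_scope.
Local Open Scope ring_scope.

(* For a finite cr-set tau, the Borel sets A admitting a closed F and an open G
   with F <= A <= G and P(tau hits G \ F) arbitrarily small form a sigma-field
   containing the open sets, since a finite set eventually misses any decreasing
   sequence of sets with empty intersection. Applying this to the finite pieces
   of a constructive pi = U_k pi_k and using countable subadditivity, every
   Borel A contains an F_sigma B with P(pi hits A \ B) = 0, and if
   P(pi hits A) = 0 then A lies in a G_delta H with P(pi hits H) = 0. Hence an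
   inequality between hitting probabilities on closed sets (resp. G_delta sets)
   extends to all Borel sets, under absolute continuity in case (b).
   Finally, in a separable space the void events {M | M `&` A = set0} are
   stable under intersection and generate C(S): with a countable separating
   family U_n, "A `&` M has at least k + 2 points" is a countable union of
   intersections of the same events for A `&` U_n and A `\` U_n. The laws then
   agree by Dynkin's pi-lambda theorem. *)

Section card_ge.
Context {T : choiceType}.
Implicit Types (X U : set T) (s : seq T).

Definition card_ge (k : nat) X : Prop :=
  exists s, [/\ uniq s, size s = k & forall x, x \in s -> X x].

Lemma card_ge_finite k X : finite_set X -> card_ge k X <-> (k <= #|` fset_set X|)%N.
Proof.
move=> fX; split.
- case=> s [us <- sX].
  rewrite -(undup_id us) -card_fseq; apply: fsubset_leq_card.
  by apply/fsubsetP => x; rewrite inE /= in_fset_set // inE => /sX.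
- move=> kX; exists (take k (fset_set X)); split.
  + exact/take_uniq/fset_uniq.
  + by rewrite size_takel.
  + by move=> x /mem_take; rewrite in_fset_set // inE.
Qed.

Lemma card_ge_infinite k X : infinite_set X -> card_ge k X.
Proof.
move=> iX; have [B BX kB] := infinite_set_fset k iX.
exists (take k B); split; first exact/take_uniq/fset_uniq.
- by rewrite size_takel.
- by move=> x /mem_take /BX.
Qed.

Lemma card_ge0 X : card_ge 0 X.
Proof. by exists [::]. Qed.

Lemma card_ge1 X : card_ge 1 X <-> X !=set0.
Proof.
split; first by case=> -[|x s] [// _ _ sX]; exists x; apply/sX/mem_head.
by case=> x Xx; exists [:: x]; split => // y; rewrite inE => /eqP ->.
Qed.

Lemma card_geU X U p q :
  card_ge p (X `&` U) -> card_ge q (X `\` U) -> card_ge (p + q) X.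
Proof.
move=> [s1 [u1 <- s1XU]] [s2 [u2 <- s2XU]]; exists (s1 ++ s2); split.
- rewrite cat_uniq u1 u2 andbT /=; apply/hasPn => x /s2XU [_ nUx].
  by apply/negP => /s1XU [].
- by rewrite size_cat.
- by move=> x; rewrite mem_cat => /orP[/s1XU []|/s2XU []].
Qed.

Lemma card_ge_count X U s : uniq s -> (forall x, x \in s -> X x) ->
  card_ge (count (fun x => `[< U x >]) s) (X `&` U) /\
  card_ge (count (predC (fun x => `[< U x >])) s) (X `\` U).
Proof.
move=> us sX; split.
- exists (seq.filter (fun x => `[< U x >]) s); rewrite size_filter.
  split=> [|//|x]; first exact: filter_uniq.
  by rewrite mem_filter => /andP[/asboolP Ux /sX].
- exists (seq.filter (predC (fun x => `[< U x >])) s); rewrite size_filter.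
  split=> [|//|x]; first exact: filter_uniq.
  by rewrite mem_filter => /andP[/asboolPn nUx /sX].
Qed.

End card_ge.

Section ncard.
Context {R : realType} {S : metricType R}.
Implicit Types X A M : set S.

Lemma ncard_Some X n : ncard X = Some n <-> card_ge n X /\ ~ card_ge n.+1 X.
Proof.
rewrite /ncard; case: pselect => fX; last first.
  by split=> // -[_ []]; exact: card_ge_infinite.
rewrite !card_ge_finite //; split; first by case=> <-; rewrite ltnn.
by case=> nX /negP; rewrite -leqNgt => Xn; congr Some; apply/eqP; rewrite eqn_leq Xn.
Qed.

Lemma ncard_None X : ncard X = None <-> forall k, card_ge k X.
Proof.
rewrite /ncard; case: pselect => fX; last by split=> // _ k; exact: card_ge_infinite.
by split=> // /(_ (#|` fset_set X|).+1) /(card_ge_finite _ _ fX); rewrite ltnn.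
Qed.

Lemma NA_eq0 A M : NA A M = Some 0%N <-> A `&` M = set0.
Proof.
rewrite /NA ncard_Some card_ge1; split.
- by case=> _ /set0P/negP; rewrite negbK => /eqP.
- by move=> ->; split=> [|[]//]; exact: card_ge0.
Qed.

End ncard.

Section generated_sigma_algebra.
Context {T : Type} {D : set T} {G : set (set T)}.
Hypothesis G_sub : forall X, G X -> X `<=` D.
Local Notation Sigma := <<s D, G >>.

Lemma g_sigma_sub X : Sigma X -> X `<=` D.
Proof.
move: X; apply: smallest_sub G_sub; split; first exact: sub0set.
- by move=> A _; exact: subDsetl.
- by move=> F DF; apply: bigcup_sub => n _; exact: DF.
Qed.

Let Sigma_closed := (sigma_algebraP g_sigma_sub).1 (smallest_sigma_algebra D G).

Lemma g_sigma_carrier : Sigma D.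
Proof. by case: Sigma_closed. Qed.

Lemma g_sigmaI X Y : Sigma X -> Sigma Y -> Sigma (X `&` Y).
Proof. by case: Sigma_closed => _ _ _; apply. Qed.

Lemma g_sigmaU X Y : Sigma X -> Sigma Y -> Sigma (X `|` Y).
Proof.
move=> SX SY; rewrite -bigcup2E; apply: sigma_algebra_bigcup => -[|[|n]] //=.
exact: sigma_algebra0.
Qed.

Lemma g_sigmaD X Y : Sigma X -> Sigma Y -> Sigma (X `\` Y).
Proof.
move=> SX SY; rewrite -[X `\` Y]set0U -(setDv X) -setDIr.
case: Sigma_closed => _ SD _ SI.
by apply: SD; [exact: subIsetl|exact: SX|exact: SI].
Qed.

Lemma g_sigma_bigcap (F : (set T)^nat) :
  (forall n, Sigma (F n)) -> Sigma (\bigcap_n F n).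
Proof.
move=> SF; have -> : \bigcap_n F n = D `\` \bigcup_n (D `\` F n).
  apply/seteqP; split=> x.
  - move=> Fx; split; first exact: g_sigma_sub (SF 0%N) _ (Fx 0%N I).
    by case=> n _ [_]; apply; exact: Fx.
  - by move=> [Dx nFx] n _; apply: contrapT => Fnx; apply: nFx; exists n.
by apply: sigma_algebraCD; apply: sigma_algebra_bigcup => n; exact: sigma_algebraCD.
Qed.

End generated_sigma_algebra.

Section borel.
Context {R : realType} {S : metricType R}.
Local Notation borel := (@borel_sets R S).
Let open_sub (X : set S) : open X -> X `<=` setT := fun _ => @subsetT _ X.

Lemma borel_open {A : set S} : open A -> borel A.
Proof. exact: sub_sigma_algebra. Qed.

Lemma borel_closed {A : set S} : closed A -> borel A.
Proof.
move=> cA; rewrite -[A]setCK -setTD.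
by apply: sigma_algebraCD; apply: borel_open; rewrite openC.
Qed.

Lemma borelI {A B : set S} : borel A -> borel B -> borel (A `&` B).
Proof. exact: (g_sigmaI open_sub). Qed.

Lemma borelU {A B : set S} : borel A -> borel B -> borel (A `|` B).
Proof. exact: g_sigmaU. Qed.

Lemma borelD {A B : set S} : borel A -> borel B -> borel (A `\` B).
Proof. exact: (g_sigmaD open_sub). Qed.

Lemma borel_bigcup {F : (set S)^nat} : (forall n, borel (F n)) -> borel (\bigcup_n F n).
Proof. exact: sigma_algebra_bigcup. Qed.

Lemma borel_bigcap {F : (set S)^nat} : (forall n, borel (F n)) -> borel (\bigcap_n F n).
Proof. exact: (g_sigma_bigcap open_sub). Qed.

End borel.

Definition unpair (p : nat) : (nat * nat)%type := odflt (0%N, 0%N) (choice.unpickle p).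

Lemma unpairK : cancel (@choice.pickle (nat * nat)%type) unpair.
Proof. by move=> q; rewrite /unpair choice.pickleK. Qed.

Section countable_pairs.
Context {T : Type} (F : nat -> nat -> set T).

Lemma bigcup_unpair :
  \bigcup_p F (unpair p).1 (unpair p).2 = \bigcup_n \bigcup_i F n i.
Proof.
apply/seteqP; split=> x.
  by case=> p _ Fx; exists (unpair p).1 => //; exists (unpair p).2.
by case=> n _ [i _ Fx]; exists (choice.pickle (n, i)) => //; rewrite unpairK.
Qed.

Lemma bigcap_unpair :
  \bigcap_p F (unpair p).1 (unpair p).2 = \bigcap_n \bigcap_i F n i.
Proof.
apply/seteqP; split=> x Fx; last by move=> p _; exact: Fx.
by move=> n _ i _; have := Fx (choice.pickle (n, i)) I; rewrite unpairK.
Qed.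

End countable_pairs.

Section Gdelta_Fsigma_countable.
Context {T : topologicalType}.

Lemma Gdelta_bigcap (F : (set T)^nat) :
  (forall n, Gdelta (F n)) -> Gdelta (\bigcap_n F n).
Proof.
move=> GF; have /choice[V hV] : forall n, exists V : (set T)^nat,
    (forall i, open (V i)) /\ F n = \bigcap_i V i.
  by move=> n; have [V oV ->] := GF n; exists V.
exists (fun p => V (unpair p).1 (unpair p).2).
  by move=> p; case: (hV (unpair p).1).
by rewrite bigcap_unpair; apply: eq_bigcapr => n _; case: (hV n).
Qed.

Lemma Fsigma_bigcup (F : (set T)^nat) :
  (forall n, Fsigma (F n)) -> Fsigma (\bigcup_n F n).
Proof.
move=> FF; have /choice[C hC] : forall n, exists C : (set T)^nat,
    (forall i, closed (C i)) /\ F n = \bigcup_i C i.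
  by move=> n; have [C cC ->] := FF n; exists C.
exists (fun p => C (unpair p).1 (unpair p).2).
  by move=> p; case: (hC (unpair p).1).
by rewrite bigcup_unpair; apply: eq_bigcupr => n _; case: (hC n).
Qed.

End Gdelta_Fsigma_countable.

Section metric_topology.
Context {R : realType} {S : metricType R}.
Implicit Types (x y : S) (F G : set S).

Lemma open_ball x (r : R) : open (ball x r).
Proof.
rewrite openE => y; rewrite /= ballEmdist /= => xy.
apply/nbhs_ballP; exists (r - mdist x y); first by rewrite /= subr_gt0.
move=> z; rewrite /= !ballEmdist /= => yz.
have := metric_triangle x y z; lra.
Qed.

Lemma separable_separating_open : separable_space S ->
  exists U : (set S)^nat, (forall n, open (U n)) /\
    (forall x y, x <> y -> exists n, U n x /\ ~ U n y).
Proof.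
move=> [D [cD clD]].
have [[x0 _]|S0] := pselect (exists x : S, True); last first.
  by exists (fun=> set0); split=> [n|x]; [exact: open0|case: S0; exists x].
have /countable_injP[f injf] := cD.
pose c n := 'pinv_(fun=> x0) D f n.
exists (fun p => ball (c (unpair p).1) (unpair p).2.+1%:R^-1).
split=> [p|x y xy]; first exact: open_ball.
have dxy : 0 < mdist x y / 3 by rewrite divr_gt0 // mdist_gt0; apply/eqP.
have [m] := ltr_add_invr dxy; rewrite add0r => mxy.
have m0 : 0 < m.+1%:R^-1 :> R by rewrite invr_gt0.
have /(_ _ (nbhsx_ballx x _ m0)) [z [Dz xz]] : closure D x by rewrite clD.
exists (choice.pickle (f z, m)); rewrite unpairK /c pinvKV ?inE //; split.
  exact: ball_sym.
move: xz; rewrite /= !ballEmdist /= => xz zy.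
(* restated so that [lra] sees the same atom [m.+1%:R^-1] as in [xz] *)
have {}zy : mdist z y < (m.+1%:R^-1 : R) := zy.
have := metric_triangle x z y; move: mxy xz zy; generalize (m.+1%:R^-1 : R) => q; lra.
Qed.

Definition shrink G (n : nat) : set S := ~` \bigcup_(y in ~` G) ball y n.+1%:R^-1.

Lemma closed_shrink G n : closed (shrink G n).
Proof. by rewrite closedC; apply: bigcup_open => y _; exact: open_ball. Qed.

Lemma shrink_sub G n : shrink G n `<=` G.
Proof.
move=> x Gnx; apply: contrapT => nGx; apply: Gnx; exists x => //.
have n0 : 0 < n.+1%:R^-1 :> R by rewrite invr_gt0.
exact: (ball_center x (PosNum n0)).
Qed.

Lemma shrink_nondecreasing G n m : (n <= m)%N -> shrink G n `<=` shrink G m.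
Proof.
move=> nm x Gnx [y nGy yx]; apply: Gnx; exists y => //; apply: le_ball yx.
by rewrite lef_pV2 ?posrE ?ltr0n // ler_nat.
Qed.

Lemma bigcup_shrink G : open G -> \bigcup_n shrink G n = G.
Proof.
move=> oG; apply/seteqP; split=> [x [n _]|x Gx]; first exact: shrink_sub.
have /nbhs_ballP[e /= e0 eG] : nbhs x G by move: oG; rewrite openE; exact.
have [n] := ltr_add_invr e0; rewrite add0r => ne.
exists n => // -[y nGy /ball_sym yx]; apply/nGy/eG.
by apply: le_ball yx; exact: ltW.
Qed.

Lemma closed_Gdelta F : closed F -> Gdelta F.
Proof.
move=> cF; exists (fun n => ~` shrink (~` F) n).
  by move=> n; rewrite openC; exact: closed_shrink.
by rewrite -setC_bigcup bigcup_shrink ?setCK // openC.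
Qed.

Lemma Fsigma_borel {F : set S} : Fsigma F -> borel_sets F.
Proof. by case=> C cC ->; apply: borel_bigcup => n; exact: borel_closed. Qed.

Lemma Gdelta_borel {G : set S} : Gdelta G -> borel_sets G.
Proof. by case=> V oV ->; apply: borel_bigcap => n; exact: borel_open. Qed.

End metric_topology.

Section void_sets.
Context {R : realType} {S : metricType R}.
Local Notation CS := (@CS R S).
Local Notation borel := (@borel_sets R S).
Implicit Types (A : set S) (M : set S).

Definition void A : set (set S) := CS `&` [set M | A `&` M = set0].

Definition void_sets : set (set (set S)) := [set void A | A in borel].

Definition meets_ge (k : nat) A : set (set S) := CS `&` [set M | card_ge k (A `&` M)].

Lemma void_sets_sub E : void_sets E -> E `<=` CS.
Proof. by case=> A _ <-; exact: subIsetl. Qed.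

Lemma void_setsI : setI_closed void_sets.
Proof.
move=> _ _ [A bA <-] [B bB <-]; exists (A `|` B); first exact: borelU.
rewrite /void setIACA setIid; congr (_ `&` _); apply/seteqP; split=> M /=.
- move=> AB0; split; rewrite -subset0 -AB0; apply: setSI.
  + exact: subsetUl.
  + exact: subsetUr.
- by move=> [AM0 BM0]; rewrite setIUl AM0 BM0 setU0.
Qed.

Lemma CS_gen_sub E : CS_gen E -> E `<=` CS.
Proof. by case=> A [B [_ ->]]; exact: subIsetl. Qed.

Lemma CS_sigma_sub E : CS_sigma E -> E `<=` CS.
Proof. exact: (g_sigma_sub CS_gen_sub). Qed.

Lemma void_CS_sigma A : borel A -> CS_sigma (void A).
Proof.
move=> bA; apply: sub_sigma_algebra; exists A, [set Some 0%N]; split=> //.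
by apply/seteqP; split=> M [CSM AM]; split=> //=; apply/NA_eq0.
Qed.

Lemma CS_genE A (B : set (option nat)) :
  CS `&` [set M | B (NA A M)] =
  \bigcup_n (if `[< B (Some n) >] then meets_ge n A `\` meets_ge n.+1 A else set0)
  `|` (if `[< B None >] then \bigcap_k meets_ge k A else set0).
Proof.
apply/seteqP; split=> M.
- move=> [CSM /= BAM]; case AM: (NA A M) => [n|] in BAM *.
  + left; exists n => //; rewrite asboolT //.
    by move/ncard_Some: AM => [AMn AMSn]; split=> [|[]].
  + right; rewrite asboolT //; move/ncard_None: AM => AMk k _.
    by split; last exact: AMk.
- case=> [[n _]|]; case: asboolP => // Bn.
  + move=> [[CSM AMn] AMSn]; split=> //=.
    by suff -> : NA A M = Some n by []; apply/ncard_Some; split=> // AMSn'; exact: AMSn.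
  + move=> AMk; have [CSM _] := AMk 0%N I; split=> //=.
    by suff -> : NA A M = None by []; apply/ncard_None => k; have [] := AMk k I.
Qed.

Section separating_family.
Variable U : (set S)^nat.
Hypothesis borel_U : forall n, borel (U n).
Hypothesis U_separating : forall x y, x <> y -> exists n, U n x /\ ~ U n y.
Local Notation Sigma := <<s CS, void_sets >>.

(* Two points of [A `&` M] separated by [U n] split any [k.+2] of its points
   into [p.+1] inside and [(k - p).+1] outside [U n]. *)
Lemma meets_geSS k A : meets_ge k.+2 A = \bigcup_n \bigcup_p
  (if (p <= k)%N then meets_ge p.+1 (A `&` U n) `&` meets_ge (k - p).+1 (A `\` U n)
   else set0).
Proof.
have splitI n M : A `&` U n `&` M = A `&` M `&` U n by rewrite setIAC.
have splitD n M : (A `\` U n) `&` M = A `&` M `\` U n by rewrite setIDAC setIDA.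
apply/seteqP; split=> M.
- move=> [CSM [[|x [|y t]] [// us st AMst]]].
  have [|n [Unx nUny]] := U_separating x y.
    by move=> exy; move: us; rewrite exy /= inE eqxx.
  have [inU outU] := card_ge_count _ (U n) _ us AMst.
  set p := count _ _ in inU; set q := count _ _ in outU.
  have pq : (p + q = k.+2)%N by rewrite count_predC st.
  have p0 : (0 < p)%N by rewrite /p /= asboolT.
  have q0 : (0 < q)%N by rewrite /q /= asboolT //= asboolF.
  exists n => //; exists p.-1 => //; rewrite ifT; last by lia.
  split; split=> //=; first by rewrite splitI prednK.
  by rewrite splitD (_ : (k - p.-1).+1 = q) //; lia.
- case=> n _ [p _]; case: ifP => // pk [[CSM inU] [_ outU]]; split=> //.
  rewrite (_ : k.+2 = p.+1 + (k - p).+1)%N; last by lia.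
  apply: (card_geU _ (U n)).
  + by rewrite -splitI.
  + by rewrite -splitD.
Qed.

Lemma meets_ge_Sigma k A : borel A -> Sigma (meets_ge k A).
Proof.
elim/ltn_ind: k A => -[|[|k]] IH A bA.
- rewrite (_ : meets_ge 0 A = CS); first exact: (g_sigma_carrier void_sets_sub).
  by apply/seteqP; split=> [M []//|M CSM]; split=> //; exact: card_ge0.
- rewrite (_ : meets_ge 1 A = CS `\` void A).
    by apply: sigma_algebraCD; apply: sub_sigma_algebra; exists A.
  apply/seteqP; split=> M [CSM].
  + by move/card_ge1 => AM; split=> // -[_ AM0]; rewrite AM0 in AM; case: AM.
  + by move=> nvoid; split=> //; apply/card_ge1/set0P/eqP => AM0; exact: nvoid.
- rewrite meets_geSS; apply: sigma_algebra_bigcup => n.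
  apply: sigma_algebra_bigcup => p.
  case: ifP => pk; last exact: sigma_algebra0.
  apply: (g_sigmaI void_sets_sub); apply: IH.
  + by rewrite ltnS.
  + exact: borelI.
  + by rewrite !ltnS leq_subr.
  + exact: borelD.
Qed.

Lemma CS_sigma_Sigma E : CS_sigma E -> Sigma E.
Proof.
apply: smallest_sub; first exact: smallest_sigma_algebra.
move=> _ [A [B [bA ->]]]; rewrite CS_genE; apply: g_sigmaU.
- apply: sigma_algebra_bigcup => n; case: ifP => _; last exact: sigma_algebra0.
  by apply: (g_sigmaD void_sets_sub); exact: meets_ge_Sigma.
- case: ifP => _; last exact: sigma_algebra0.
  by apply: (g_sigma_bigcap void_sets_sub) => k; exact: meets_ge_Sigma.
Qed.

End separating_family.
End void_sets.

Section hitting_events.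
Context {d : measure_display} {Om : measurableType d} {R : realType}
  {S : metricType R}.
Local Notation borel := (@borel_sets R S).
Implicit Types (pi : Om -> set S) (A B : set S).

Definition hit pi A : set Om := [set w | pi w `&` A !=set0].

Lemma hitS pi A B : A `<=` B -> hit pi A `<=` hit pi B.
Proof. by move=> AB w [x [pix Ax]]; exists x; split=> //; exact: AB. Qed.

Lemma hitU pi A B : hit pi (A `|` B) = hit pi A `|` hit pi B.
Proof.
apply/seteqP; split=> w; first by case=> x [pix [Ax|Bx]]; [left|right]; exists x.
by case=> -[x [pix ABx]]; exists x; split=> //; [left|right].
Qed.

Lemma hit_bigcup pi (F : (set S)^nat) :
  hit pi (\bigcup_n F n) = \bigcup_n hit pi (F n).
Proof.
apply/seteqP; split=> w; first by case=> x [pix [n _ Fx]]; exists n => //; exists x.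
by case=> n _ [x [pix Fx]]; exists x; split=> //; exists n.
Qed.

Lemma hit_setU_seq { pi : Om -> set S } {pk : nat -> Om -> set S} A :
  (forall w, pi w = \bigcup_k pk k w) -> hit pi A = \bigcup_k hit (pk k) A.
Proof.
move=> pi_pk; apply/seteqP; split=> w.
- by case=> x [+ Ax]; rewrite pi_pk => -[k _ pkx]; exists k => //; exists x.
- by case=> k _ [x [pkx Ax]]; exists x; split=> //; rewrite pi_pk; exists k.
Qed.

Lemma preimage_void pi A : (forall w, countable (pi w)) ->
  pi @^-1` void A = ~` hit pi A.
Proof.
move=> cpi; apply/seteqP; split=> w.
- by case=> _ /= piA0 [x [pix Ax]]; have : (A `&` pi w) x by []; rewrite piA0.
- move=> nhit; split; first exact: cpi.
  by apply/seteqP; split=> // x [Ax pix]; apply: nhit; exists x.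
Qed.

Lemma hit_measurable { pi : Om -> set S } {A : set S} :
  crset pi -> borel A -> measurable (hit pi A).
Proof.
move=> [cpi mpi] bA; rewrite -[hit _ _]setCK -preimage_void //.
by apply/measurableC/mpi; exact: void_CS_sigma.
Qed.

End hitting_events.

Section laws.
Context {d : measure_display} {Om : measurableType d} {R : realType}
  {S : metricType R} (P : probability Om R).
Local Notation CS := (@CS R S).
Local Notation borel := (@borel_sets R S).
Local Open Scope ereal_scope.

Lemma hitPE (pi : Om -> set S) A : hitP P pi A = P (hit pi A).
Proof. by []. Qed.

Lemma law_eq_lambda_system (f g : Om -> set S) : crset f -> crset g ->
  lambda_system CS [set E | CS_sigma E /\ P (f @^-1` E) = P (g @^-1` E)].
Proof.
move=> [CSf mf] [CSg mg]; split.
- by move=> E [/CS_sigma_sub]; exact.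
- split; first exact: (g_sigma_carrier CS_gen_sub).
  have preCS h : (forall w, CS (h w)) -> h @^-1` CS = setT.
    by move=> CSh; apply/seteqP; split=> // w _; exact: CSh.
  by rewrite (preCS _ f CSf) (preCS _ g CSg).
- move=> E F FE [SE PE] [SF PF]; split.
    exact: (g_sigmaD CS_gen_sub).
  have preD h : h @^-1` (E `\` F) = h @^-1` E `\` h @^-1` F by [].
  have Plty X : measurable X -> P X < +oo.
    by move=> mX; exact: le_lt_trans (probability_le1 P mX) (ltry 1).
  have mfE := mf _ SE; have mfF := mf _ SF; have mgE := mg _ SE; have mgF := mg _ SF.
  rewrite !preD !measureD //; try exact: Plty.
  rewrite (setIidr (preimage_subset (f:=f) FE)) (setIidr (preimage_subset (f:=g) FE)).
  by congr (_ - _); [exact: PE|exact: PF].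
- move=> F ndF SF; split; first by apply: sigma_algebra_bigcup => n; case: (SF n).
  have ndpre h : nondecreasing_seq (fun n => h @^-1` F n).
    move=> n m nm; apply/subsetPset; apply: preimage_subset.
    exact: (elimT (subsetPset _ _) (ndF n m nm)).
  have cvgP h : (forall E, CS_sigma E -> measurable (h @^-1` E)) ->
      P \o (fun n => h @^-1` F n) @ \oo --> P (\bigcup_n h @^-1` F n).
    move=> mh; apply: nondecreasing_cvg_mu; last exact: ndpre.
    + by move=> n; apply: mh; case: (SF n).
    + by apply: bigcupT_measurable => n; apply: mh; case: (SF n).
  have PFn : P \o (fun n => f @^-1` F n) = P \o (fun n => g @^-1` F n).
    by apply/funext => n /=; case: (SF n).
  have := cvgP _ mf; rewrite PFn !preimage_bigcup => /cvg_unique; apply.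
    exact: ereal_hausdorff.
  by rewrite -preimage_bigcup; exact: cvgP.
Qed.

Lemma law_eq_hitP (pi1 pi2 : Om -> set S) :
  separable_space S -> crset pi1 -> crset pi2 ->
  (forall A, borel A -> hitP P pi1 A = hitP P pi2 A) -> law_eq P pi1 pi2.
Proof.
move=> sepS cr1 cr2 hit12 E SE.
have [U [oU sepU]] := separable_separating_open sepS.
have [c1 _] := cr1; have [c2 _] := cr2.
suff : <<s CS, void_sets >> `<=`
    [set E | CS_sigma E /\ P (pi1 @^-1` E) = P (pi2 @^-1` E)].
  by move=> /(_ E (CS_sigma_Sigma U (fun n => borel_open (oU n)) sepU _ SE)) [].
apply: lambda_system_subset; first exact: void_setsI.
- exact: law_eq_lambda_system.
- move=> _ [A bA <-]; split; first exact: void_CS_sigma.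
  rewrite !preimage_void // !probability_setC; try exact: hit_measurable.
  by rewrite -!hitPE hit12.
- exact: g_sigma_sub void_sets_sub.
Qed.

End laws.

Section hit_probability.
Context {d : measure_display} {Om : measurableType d} {R : realType}
  {S : metricType R} (P : probability Om R).
Local Notation borel := (@borel_sets R S).
Local Open Scope ereal_scope.
Implicit Types (pi : Om -> set S) (A B : set S).

Lemma hitP_le { pi : Om -> set S } {A B : set S} :
  crset pi -> borel A -> borel B -> A `<=` B ->
  P (hit pi A) <= P (hit pi B).
Proof.
move=> cr bA bB AB; apply: le_measure; rewrite ?inE; try exact: hit_measurable.
exact: hitS.
Qed.

Lemma hitP_setU { pi : Om -> set S } {A B : set S} : crset pi -> borel A -> borel B ->
  P (hit pi (A `|` B)) <= P (hit pi A) + P (hit pi B).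
Proof. by move=> cr bA bB; rewrite hitU; apply: measureU2; exact: hit_measurable. Qed.

End hit_probability.

Section ereal_limits.
Context {R : realType}.
Local Open Scope ereal_scope.

Lemma cvg_fin_num_lt (u : (\bar R)^nat) (l : \bar R) (e : R) :
  u @ \oo --> l -> l \is a fin_num -> (0 < e)%R -> exists N, u N < l + e%:E.
Proof.
case: l => // r ur _ e0; have re : (r < r + e)%R by rewrite ltrDl.
have [N _ uN] := ur _ (@nbhs_open_ereal_lt _ r (fun x => x + e)%R re).
by exists N; exact: (uN N (leqnn N)).
Qed.

Lemma cvg_fin_num_gt (u : (\bar R)^nat) (l : \bar R) (e : R) :
  u @ \oo --> l -> l \is a fin_num -> (0 < e)%R -> exists N, l - e%:E < u N.
Proof.
case: l => // r ur _ e0; have re : (r - e < r)%R by rewrite ltrBlDr ltrDl.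
have [N _ uN] := ur _ (@nbhs_open_ereal_gt _ r (fun x => x - e)%R re).
by exists N; exact: (uN N (leqnn N)).
Qed.

Lemma lee0_inv (x : \bar R) : (forall m : nat, x < (m.+1%:R^-1)%:E) -> x <= 0.
Proof.
move=> xm; apply/lee_addgt0Pr => e e0; have [m] := ltr_add_invr e0.
by rewrite add0r add0e => me; rewrite (le_trans (ltW (xm m))) // lee_fin ltW.
Qed.

End ereal_limits.

Section probability_approximation.
Context {d : measure_display} {Om : measurableType d} {R : realType}
  (P : probability Om R).
Local Open Scope ereal_scope.
Implicit Types (F : (set Om)^nat).

Lemma probability_bigcup_approx F : (forall n, measurable (F n)) ->
  (forall n m, (n <= m)%N -> F n `<=` F m) ->
  forall e : R, (0 < e)%R -> exists N, P (\bigcup_n F n) < P (F N) + e%:E.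
Proof.
move=> mF ndF e e0; have mU := bigcupT_measurable _ mF.
have := @nondecreasing_cvg_mu _ _ _ P F mF mU
  (fun n m nm => introT (subsetPset _ _) (ndF n m nm)).
move=> /cvg_fin_num_gt /(_ (fin_num_measure P _ mU) e0)[N PN].
by exists N; rewrite -lte_subel_addr ?(fin_num_measure P _ mU).
Qed.

Lemma probability_bigcap0_approx F : (forall n, measurable (F n)) ->
  (forall n m, (n <= m)%N -> F m `<=` F n) -> \bigcap_n F n = set0 ->
  forall e : R, (0 < e)%R -> exists N, P (F N) < e%:E.
Proof.
move=> mF niF F0 e e0.
have := @nonincreasing_cvg_mu _ _ _ P F
  (le_lt_trans (probability_le1 P (mF 0%N)) (ltry 1)) mF
  (bigcapT_measurable mF) (fun n m nm => introT (subsetPset _ _) (niF n m nm)).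
rewrite F0 measure0 => /cvg_fin_num_lt /(_ isT e0)[N].
by rewrite add0e; exists N.
Qed.

Lemma probability_bigcup0 F : (forall n, measurable (F n)) ->
  (forall n, P (F n) = 0) -> P (\bigcup_n F n) = 0.
Proof.
move=> mF F0; apply/(negligibleP P (bigcupT_measurable _ mF)).
by apply: negligible_bigcup => n; apply/(negligibleP P (mF n)); exact: F0.
Qed.

End probability_approximation.

Lemma finite_set_bigcap0 {T : choiceType} (X : set T) (D : (set T)^nat) :
  finite_set X -> (forall n m, (n <= m)%N -> D m `<=` D n) ->
  \bigcap_n D n = set0 -> exists N, X `&` D N = set0.
Proof.
move=> /finite_fsetP[B ->] niD D0.
have escape x : exists N, ~ D N x.
  apply: contrapT => /forallNP allD.
  have : (\bigcap_n D n) x by move=> n _; apply: contrapT; exact: allD.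
  by rewrite D0.
suff [N BN] : exists N, forall x, x \in (B : seq T) -> ~ D N x.
  by exists N; apply/seteqP; split=> // x [/BN].
elim: (B : seq T) => [|x s [N sN]]; first by exists 0%N.
have [Nx Dx] := escape x; exists (maxn N Nx) => y; rewrite inE => /orP[/eqP ->|ys].
- by move/(niD _ _ (leq_maxr N Nx)).
- by move/(niD _ _ (leq_maxl N Nx)); exact: sN.
Qed.

Section finite_random_set.
Context {d : measure_display} {Om : measurableType d} {R : realType}
  {S : metricType R} (P : probability Om R).
Local Notation borel := (@borel_sets R S).
Local Open Scope ereal_scope.
Variable tau : Om -> set S.
Hypothesis tau_fin : finite_crset tau.

Let tau_cr : crset tau. Proof. by case: tau_fin. Qed.

Let mhit {A : set S} : borel A -> measurable (hit tau A).
Proof. exact: hit_measurable. Qed.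

Lemma hitP_bigcap0_approx (D : (set S)^nat) : (forall n, borel (D n)) ->
  (forall n m, (n <= m)%N -> D m `<=` D n) -> \bigcap_n D n = set0 ->
  forall e : R, (0 < e)%R -> exists N, P (hit tau (D N)) < e%:E.
Proof.
move=> bD niD D0; apply: probability_bigcap0_approx.
- by move=> n; exact: mhit.
- by move=> n m nm; apply: hitS; exact: niD.
- apply/seteqP; split=> // w hitw.
  have [N tauD0] := finite_set_bigcap0 _ _ (proj2 tau_fin w) niD D0.
  by have [x [taux Dx]] := hitw N I; have : (tau w `&` D N) x by []; rewrite tauD0.
Qed.

Definition hit_regular (A : set S) := forall e : R, (0 < e)%R -> exists F G,
  [/\ closed F, open G, F `<=` A, A `<=` G & P (hit tau (G `\` F)) < e%:E].

Lemma open_hit_regular G : open G -> hit_regular G.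
Proof.
move=> oG e e0.
have [|||N hitN] := @hitP_bigcap0_approx (fun n => G `\` shrink G n) _ _ _ e e0.
- move=> n; apply: borelD; first exact: borel_open.
  by apply: borel_closed; exact: closed_shrink.
- move=> n m nm x [Gx nshx]; split=> // shx; apply: nshx.
  exact: (shrink_nondecreasing G n m nm).
- by rewrite bigcupDr ?bigcup_shrink ?setDv //; exists 0%N.
exists (shrink G N), G; split=> //; [exact: closed_shrink|exact: shrink_sub].
Qed.

Lemma hit_regularC A : hit_regular A -> hit_regular (~` A).
Proof.
move=> regA e e0; have [F [G [cF oG FA AG hitGF]]] := regA e e0.
exists (~` G), (~` F); split; rewrite ?closedC ?openC //; try exact: subsetC.
by rewrite setDE setCK setIC -setDE.
Qed.

Lemma hit_regular_bigcup (A : (set S)^nat) :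
  (forall n, hit_regular (A n)) -> hit_regular (\bigcup_n A n).
Proof.
move=> regA e e0; have e2 : (0 < e / 2)%R by rewrite divr_gt0.
have /choice[FG regFG] n : exists FG : set S * set S,
    [/\ closed FG.1, open FG.2, FG.1 `<=` A n, A n `<=` FG.2 &
        P (hit tau (FG.2 `\` FG.1)) < (e / 2 / (2 ^ n.+1)%:R)%:E].
  have [|F [G ?]] := regA n (e / 2 / (2 ^ n.+1)%:R)%R; last by exists (F, G).
  by rewrite divr_gt0 // ltr0n expn_gt0.
pose F n := (FG n).1; pose G n := (FG n).2.
have cF n : closed (F n) by case: (regFG n).
have oG n : open (G n) by case: (regFG n).
pose Fle N := \bigcup_(n < N) F n.
have cFle N : closed (Fle N) by rewrite /Fle bigcup_mkord; apply: closed_bigsetU.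
have bG n : borel (G n `\` F n).
  by apply: borelD; [exact: borel_open|exact: borel_closed].
have [|||N hitN] := @hitP_bigcap0_approx (fun N => \bigcup_n F n `\` Fle N) _ _ _ _ e2.
- move=> N; apply: borelD; last exact: borel_closed.
  by apply: borel_bigcup => n; exact: borel_closed.
- move=> n m nm x [Fx nFx]; split=> // -[i /= im Fix]; apply: nFx.
  by exists i => //; exact: leq_trans im nm.
- apply/seteqP; split=> // x Dx; have [[n _ Fnx] _] := Dx 0%N I.
  by have [_] := Dx n.+1 I; apply; exists n => /=.
exists (Fle N), (\bigcup_n G n); split; first exact: cFle.
- by apply: bigcup_open => n _; exact: oG.
- by move=> x [n /= _ Fnx]; exists n => //; case: (regFG n) => _ _ + _ _; apply.
- by move=> x [n _ Anx]; exists n => //; case: (regFG n) => _ _ _ + _; apply.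
have bGF : borel (\bigcup_n (G n `\` F n)) by exact: borel_bigcup.
have sub : \bigcup_n G n `\` Fle N `<=`
    (\bigcup_n F n `\` Fle N) `|` \bigcup_n (G n `\` F n).
  move=> x [[n _ Gnx] nFx]; have [Fnx|nFnx] := pselect (F n x).
  + by left; split=> //; exists n.
  + by right; exists n.
have bF : borel (\bigcup_n F n) by apply: borel_bigcup => n; exact: borel_closed.
have bD : borel (\bigcup_n F n `\` Fle N) by apply: borelD => //; exact: borel_closed.
have bGFle : borel (\bigcup_n G n `\` Fle N).
  by apply: borelD; [apply: borel_bigcup => n; exact: borel_open|exact: borel_closed].
rewrite (splitr e) EFinD.
apply: (le_lt_trans (hitP_le P tau_cr bGFle (borelU bD bGF) sub)).
apply: (le_lt_trans (hitP_setU P tau_cr bD bGF)).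
apply: lte_leD => //; first exact: fin_num_measure P _ (mhit bGF).
have mhitGF n : measurable (hit tau (G n `\` F n)) by exact: mhit.
rewrite hit_bigcup; apply: (le_trans (measure_sigma_subadditive P mhitGF _ _)) => //.
  exact: bigcupT_measurable.
apply: (le_trans (@lee_nneseries _ _
  (fun n => 0 + (e / 2 / (2 ^ n.+1)%:R)%:E) xpredT 0%N _ _)).
- by move=> *; exact: measure_ge0.
- by move=> n _; rewrite add0e; apply: ltW; case: (regFG n).
by apply: (le_trans (epsilon_trick xpredT _ (ltW e2))) => //; rewrite eseries0 // add0e.
Qed.

Lemma borel_hit_regular A : borel A -> hit_regular A.
Proof.
have reg_sigma : sigma_algebra setT hit_regular.
  split=> [e e0|B regB|B regB]; last exact: hit_regular_bigcup.
  - exists set0, set0; split=> //; [exact: closed0|exact: open0|].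
    rewrite setD0 (_ : hit tau set0 = set0) ?measure0 ?lte_fin //.
    by apply/seteqP; split=> // w [x []].
  - by rewrite setTD; exact: hit_regularC.
move: A; apply: (smallest_sub reg_sigma) => G; exact: open_hit_regular.
Qed.

End finite_random_set.

Section constructive_random_set.
Context {d : measure_display} {Om : measurableType d} {R : realType}
  {S : metricType R} (P : probability Om R).
Local Notation borel := (@borel_sets R S).
Local Open Scope ereal_scope.
Implicit Types (pi : Om -> set S) (A B : set S).

Lemma finite_crset_regular_seq {pk : nat -> Om -> set S} {A : set S} :
  (forall k, finite_crset (pk k)) -> borel A ->
  exists F G : nat -> nat -> set S, forall k m,
    [/\ closed (F k m), open (G k m), F k m `<=` A, A `<=` G k m &
        P (hit (pk k) (G k m `\` F k m)) < (m.+1%:R^-1)%:E].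
Proof.
move=> pk_fin bA.
have /choice[FG regFG] (km : (nat * nat)%type) : exists FG : set S * set S,
    [/\ closed FG.1, open FG.2, FG.1 `<=` A, A `<=` FG.2 &
        P (hit (pk km.1) (FG.2 `\` FG.1)) < (km.2.+1%:R^-1)%:E].
  have [|F [G ?]] := borel_hit_regular P _ (pk_fin km.1) _ bA (km.2.+1%:R^-1)%R.
    by rewrite invr_gt0.
  by exists (F, G).
exists (fun k m => (FG (k, m)).1), (fun k m => (FG (k, m)).2) => k m.
exact: regFG (k, m).
Qed.

Lemma hit_constructive_measurable { pi : Om -> set S } {A : set S} :
  constructive pi -> borel A -> measurable (hit pi A).
Proof.
move=> [pk [pk_fin pi_pk]] bA; rewrite (hit_setU_seq _ pi_pk).
by apply: bigcupT_measurable => k; apply: hit_measurable => //; case: (pk_fin k).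
Qed.

Lemma constructive_null_inner { pi : Om -> set S } {A : set S} :
  constructive pi -> borel A ->
  exists B, [/\ Fsigma B, B `<=` A & P (hit pi (A `\` B)) = 0].
Proof.
move=> con; have [pk [pk_fin pi_pk]] := con => bA.
have [F [G regFG]] := finite_crset_regular_seq pk_fin bA.
have fB : Fsigma (\bigcup_k \bigcup_m F k m).
  by apply: Fsigma_bigcup => k; exists (F k) => // m; case: (regFG k m).
exists (\bigcup_k \bigcup_m F k m); split=> //.
  by move=> x [k _ [m _]]; case: (regFG k m) => _ _ + _ _; apply.
have bAB := borelD bA (Fsigma_borel fB).
rewrite (hit_setU_seq _ pi_pk); apply: probability_bigcup0 => k.
  by apply: hit_measurable bAB; case: (pk_fin k).
apply/eqP; rewrite eq_le measure_ge0 andbT; apply: lee0_inv => m.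
have [cF oG FA AG hitGF] := regFG k m.
apply: le_lt_trans hitGF; apply: hitP_le; first by case: (pk_fin k).
- exact: bAB.
- by apply: borelD; [exact: borel_open|exact: borel_closed].
- move=> x [Ax nBx]; split; first exact: AG.
  by move=> Fx; apply: nBx; exists k => //; exists m.
Qed.

Lemma constructive_null_outer { pi : Om -> set S } {A : set S} :
  constructive pi -> borel A ->
  P (hit pi A) = 0 -> exists H, [/\ Gdelta H, A `<=` H & P (hit pi H) = 0].
Proof.
move=> con; have [pk [pk_fin pi_pk]] := con => bA hitA0.
have [F [G regFG]] := finite_crset_regular_seq pk_fin bA.
have gH : Gdelta (\bigcap_k \bigcap_m G k m).
  by apply: Gdelta_bigcap => k; exists (G k) => // m; case: (regFG k m).
exists (\bigcap_k \bigcap_m G k m); split=> //.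
  by move=> x Ax k _ m _; case: (regFG k m) => _ _ _ + _; apply.
have cr k : crset (pk k) by case: (pk_fin k).
rewrite (hit_setU_seq _ pi_pk); apply: probability_bigcup0 => k.
  exact: hit_measurable (Gdelta_borel gH).
have hitkA0 : P (hit (pk k) A) = 0.
  apply/eqP; rewrite eq_le measure_ge0 andbT -hitA0 le_measure ?inE //.
  - exact: hit_measurable.
  - exact: hit_constructive_measurable.
  - by rewrite (hit_setU_seq _ pi_pk) => w hitw; exists k.
apply/eqP; rewrite eq_le measure_ge0 andbT; apply: lee0_inv => m.
have [cF oG FA AG hitGF] := regFG k m.
have bGF : borel (G k m `\` F k m).
  by apply: borelD; [exact: borel_open|exact: borel_closed].
have HAGF : \bigcap_k \bigcap_m G k m `<=` A `|` (G k m `\` F k m).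
  move=> x Hx; have [Ax|nAx] := pselect (A x); first by left.
  by right; split; [exact: Hx k I m I|move/FA].
apply: le_lt_trans (hitP_le P (cr k) (Gdelta_borel gH) (borelU bA bGF) HAGF) _.
apply: le_lt_trans (hitP_setU P (cr k) bA bGF) _.
by rewrite hitkA0 add0e.
Qed.

Lemma hitP_inner_Fsigma { pi : Om -> set S } {A B : set S} :
  crset pi -> borel A -> Fsigma B -> B `<=` A ->
  P (hit pi (A `\` B)) = 0 -> forall e : R, (0 < e)%R ->
  exists F, [/\ closed F, F `<=` A & P (hit pi A) < P (hit pi F) + e%:E].
Proof.
move=> cr bA fB BA hitAB0 e e0; have [C cC eB] := fB.
pose Cle J := \bigcup_(n < J) C n.
have cCle J : closed (Cle J) by rewrite /Cle bigcup_mkord; exact: closed_bigsetU.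
have CleB : \bigcup_J Cle J = B.
  rewrite eB; apply/seteqP; split=> x; first by case=> J _ [n _ Cx]; exists n.
  by case=> n _ Cx; exists n.+1 => //; exists n => /=.
have [||N hitN] := probability_bigcup_approx P (fun J => hit pi (Cle J)) _ _ _ e0.
- by move=> J; apply: hit_measurable cr _; exact: borel_closed.
- move=> n m nm; apply: hitS => x [i /= ni Cix].
  by exists i => //=; exact: leq_trans ni nm.
exists (Cle N); split=> //; first by move=> x [n _ Cx]; apply: BA; rewrite eB; exists n.
have bB := Fsigma_borel fB.
have hitAB : P (hit pi A) <= P (hit pi (B `|` (A `\` B))).
  apply: hitP_le cr bA (borelU bB (borelD bA bB)) _ => x Ax.
  by have [Bx|nBx] := pselect (B x); [left|right].
apply: le_lt_trans hitN; rewrite -hit_bigcup CleB.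
apply: (le_trans hitAB); apply: (le_trans (hitP_setU P cr bB (borelD bA bB))).
by rewrite hitAB0 adde0.
Qed.

Section comparison.
Context { pi1 pi2 : Om -> set S }.
Hypotheses (cr1 : crset pi1) (cr2 : crset pi2).
Hypothesis hitP_closed_le : forall F, closed F -> P (hit pi1 F) <= P (hit pi2 F).

Lemma hitP_le_Fsigma {A B : set S} : borel A -> Fsigma B -> B `<=` A ->
  P (hit pi1 (A `\` B)) = 0 -> P (hit pi1 A) <= P (hit pi2 A).
Proof.
move=> bA fB BA hitAB0; apply/lee_addgt0Pr => e e0.
have [F [cF FA hitF]] := hitP_inner_Fsigma cr1 bA fB BA hitAB0 e e0.
apply: le_trans (ltW hitF) _; apply: leeD2r.
exact: le_trans (hitP_closed_le _ cF) (hitP_le P cr2 (borel_closed cF) bA FA).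
Qed.

Lemma hitP_le_constructive {A : set S} : constructive pi1 -> borel A ->
  P (hit pi1 A) <= P (hit pi2 A).
Proof.
move=> con1 bA; have [B [fB BA hitAB0]] := constructive_null_inner con1 bA.
exact: hitP_le_Fsigma bA fB BA hitAB0.
Qed.

Lemma hitP_le_dominated {A : set S} : constructive pi2 ->
  (forall A, borel A -> P (hit pi2 A) = 0 -> P (hit pi1 A) = 0) -> borel A ->
  P (hit pi1 A) <= P (hit pi2 A).
Proof.
move=> con2 dom bA; have [B [fB BA hitAB0]] := constructive_null_inner con2 bA.
apply: (hitP_le_Fsigma bA fB BA).
exact: dom _ (borelD bA (Fsigma_borel fB)) hitAB0.
Qed.

End comparison.

Lemma hitP_dominated_Gdelta { pi1 pi2 : Om -> set S } : crset pi1 -> constructive pi2 ->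
  (forall A, Gdelta A -> P (hit pi1 A) <= P (hit pi2 A)) ->
  forall A, borel A -> P (hit pi2 A) = 0 -> P (hit pi1 A) = 0.
Proof.
move=> cr1 con2 le12 A bA hitA0.
have [H [gH AH hitH0]] := constructive_null_outer con2 bA hitA0.
apply/eqP; rewrite eq_le measure_ge0 andbT -hitH0.
exact: le_trans (hitP_le P cr1 bA (Gdelta_borel gH) AH) (le12 _ gH).
Qed.

End constructive_random_set.

Theorem theorem1p6 (R : realType) (d : measure_display) (Om : measurableType d)
  (P : probability Om R) (S : metricType R) (pi1 pi2 : Om -> set S) :
  separable_space S -> crset pi1 -> crset pi2 ->
  [/\ (constructive pi1 -> constructive pi2 ->
        (forall F : set S, closed F -> hitP P pi1 F = hitP P pi2 F) ->
        law_eq P pi1 pi2),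
      (constructive pi2 ->
        (forall F : set S, closed F -> hitP P pi1 F = hitP P pi2 F) ->
        (forall A : set S, @borel_sets _ S A ->
           hitP P pi2 A = 0%E -> hitP P pi1 A = 0%E) ->
        law_eq P pi1 pi2)
    & (constructive pi2 ->
        (forall A : set S, Gdelta A -> hitP P pi1 A = hitP P pi2 A) ->
        law_eq P pi1 pi2)].
Proof.
move=> sepS cr1 cr2.
have hitP_eq_le (X : set (set S)) (pi pi' : Om -> set S) :
    (forall A, X A -> hitP P pi A = hitP P pi' A) ->
    forall A, X A -> (P (hit pi A) <= P (hit pi' A))%E.
  by move=> eqX A XA; rewrite -!hitPE eqX.
have hitP_eq_ge (X : set (set S)) (pi pi' : Om -> set S) :
    (forall A, X A -> hitP P pi A = hitP P pi' A) ->
    forall A, X A -> (P (hit pi' A) <= P (hit pi A))%E.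
  by move=> eqX A XA; rewrite -!hitPE eqX.
split.
- move=> con1 con2 eqF; apply: law_eq_hitP => // A bA.
  rewrite !hitPE; apply/le_anti/andP; split.
  + exact: (hitP_le_constructive P cr1 cr2 (hitP_eq_le closed _ _ eqF) con1 bA).
  + exact: (hitP_le_constructive P cr2 cr1 (hitP_eq_ge closed _ _ eqF) con2 bA).
- move=> con2 eqF dom; apply: law_eq_hitP => // A bA.
  rewrite !hitPE; apply/le_anti/andP; split.
  + exact: (hitP_le_dominated P cr1 cr2 (hitP_eq_le closed _ _ eqF) con2 dom bA).
  + exact: (hitP_le_constructive P cr2 cr1 (hitP_eq_ge closed _ _ eqF) con2 bA).
- move=> con2 eqG; have eqF F (cF : closed F) := eqG F (closed_Gdelta _ cF).
  apply: law_eq_hitP => // A bA; rewrite !hitPE; apply/le_anti/andP; split.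
  + apply: (hitP_le_dominated P cr1 cr2 (hitP_eq_le closed _ _ eqF) con2 _ bA).
    exact: (hitP_dominated_Gdelta P cr1 con2 (hitP_eq_le Gdelta _ _ eqG)).
  + exact: (hitP_le_constructive P cr2 cr1 (hitP_eq_ge closed _ _ eqF) con2 bA).
Qed.
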